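(* If (A.4) holds, then for any fixed $\zeta\in(0,1)$, \[ |F_\omega(x^\star_{\omega,\tau})-F_\omega(x^\star_\omega)|=\mathcal{O}(\tau^{1-\zeta}). \]
   Context: Let $\Omega=(t_0,t_E)$ bounded, $|\Omega|=t_E-t_0$, $t_1,\dots,t_M\in[t_0,t_E]$; $\mathcal{X}=(H^1(\Omega))^{n_y}\times(L^2(\Omega))^{n_z}$ with product inner product and norm $\|\cdot\|_{\mathcal{X}}$, $x=(y,z)$. For $f,c,b$: $F(x)=\int_\Omega f(\dot y,y,z,t)dt$, $r(x)=\int_\Omega\|c(\dot y,y,z,t)\|_2^2dt+\|b(y(t_1),\dots,y(t_M))\|_2^2$, $\Gamma(x)=-\sum_{j=1}^{n_z}\int_\Omega\log z_j(t)dt$. DOP: minimize $F$ subject to $b(\dots)=0$, $c=0$, $z\ge0$ a.e., with global minimizer $x^\star$. For $\omega\in(0,1)$: $F_\omega=F+\frac1{2\omega}r$ and $x^\star_\omega$ minimizes $F_\omega$ over $\{z\ge0\text{ a.e.}\}$. For $\tau\in(0,\omega]$: $F_{\omega,\tau}=F_\omega+\tau\Gamma$ and $x^\star_{\omega,\tau}$ minimizes $F_{\omega,\tau}$ over $\mathcal{X}$. Standing assumptions: (A.2) $\|c(\dot y(t),y(t),z(t),t)\|_1$ and $\|b(\dots)\|_1$ bounded for all $x$ with $z\ge0$, $t\in\Omega$; $F$ bounded below on $\{z\ge0\}$. (A.3) $f,c,b$ globally Lipschitz in all arguments except $t$. (A.4) $x^\star_\omega$ and $x^\star_{\omega,\tau}$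 are bounded in $\|z\|_{L^\infty(\Omega)}$ and $\|x\|_{\mathcal{X}}$, and $\|x^\star\|_{\mathcal{X}}$ is bounded. The $\mathcal{O}$ is as $\tau\to0$. *)

From HB Require Import structures.
From mathcomp Require Import all_boot all_order all_algebra.
From mathcomp Require Import all_classical all_reals all_analysis.
Set Implicit Arguments. Unset Strict Implicit. Unset Printing Implicit Defensive.
Import Order.TTheory GRing.Theory Num.Theory.
Import numFieldNormedType.Exports.
Local Open Scope classical_set_scope.
Local Open Scope ring_scope.

Section PenaltyBarrier.
Variable R : realType.
Local Notation leb := (@lebesgue_measure R).

Definition Omega (t0 tE : R) : set R := `]t0, tE[.

Definition norm1 n (v : 'rV[R]_n) : R := \sum_(i < n) `|v ord0 i|.
Definition sqnorm2 n (v : 'rV[R]_n) : R := \sum_(i < n) (v ord0 i) ^+ 2.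

Definition L2fun (t0 tE : R) (g : R -> R) : Prop :=
  measurable_fun (Omega t0 tE) g /\
  (\int[leb]_(t in Omega t0 tE) ((g t) ^+ 2)%:E < +oo)%E.
Definition L2sq (t0 tE : R) (g : R -> R) : R :=
  fine (\int[leb]_(t in Omega t0 tE) ((g t) ^+ 2)%:E)%E.

(* scalar H^1(Omega) membership: y is the absolutely continuous representative
   on [t0,tE] of an H^1 function whose weak derivative is dy in L^2(Omega) *)
Definition H1fun (t0 tE : R) (y dy : R -> R) : Prop :=
  L2fun t0 tE dy /\
  forall t, t0 <= t <= tE -> y t = y t0 + Rintegral leb `]t0, t[ dy.

(* an element x = (y, z) of X, carried together with the weak derivative of y *)
Record traj (ny nz : nat) := Traj {
  ty : R -> 'rV[R]_ny ;
  tdy : R -> 'rV[R]_ny ;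
  tz : R -> 'rV[R]_nz
}.

Variables (ny nz : nat).

Definition inX (t0 tE : R) (x : traj ny nz) : Prop :=
  (forall i : 'I_ny, H1fun t0 tE (fun t => ty x t ord0 i) (fun t => tdy x t ord0 i)) /\
  (forall j : 'I_nz, L2fun t0 tE (fun t => tz x t ord0 j)).

Definition normX (t0 tE : R) (x : traj ny nz) : R :=
  Num.sqrt (\sum_(i < ny) (L2sq t0 tE (fun t => ty x t ord0 i)
                            + L2sq t0 tE (fun t => tdy x t ord0 i))
            + \sum_(j < nz) L2sq t0 tE (fun t => tz x t ord0 j)).

Definition zLinf_le (t0 tE : R) (x : traj ny nz) (B : R) : Prop :=
  \forall t \ae leb, Omega t0 tE t -> forall j : 'I_nz, `|tz x t ord0 j| <= B.

Definition zge0 (t0 tE : R) (x : traj ny nz) : Prop :=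
  \forall t \ae leb, Omega t0 tE t -> forall j : 'I_nz, 0 <= tz x t ord0 j.

Variables (nc nb M : nat).

Definition f_integrand (f : 'rV[R]_ny -> 'rV[R]_ny -> 'rV[R]_nz -> R -> R)
  (x : traj ny nz) : R -> R :=
  fun t => f (tdy x t) (ty x t) (tz x t) t.
Definition c_integrand (c : 'rV[R]_ny -> 'rV[R]_ny -> 'rV[R]_nz -> R -> 'rV[R]_nc)
  (x : traj ny nz) : R -> R :=
  fun t => sqnorm2 (c (tdy x t) (ty x t) (tz x t) t).

Definition Fobj (t0 tE : R) f (x : traj ny nz) : R :=
  Rintegral leb (Omega t0 tE) (f_integrand f x).

Definition rpen (t0 tE : R) c (b : ('I_M -> 'rV[R]_ny) -> 'rV[R]_nb)
  (tp : 'I_M -> R) (x : traj ny nz) : R :=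
  Rintegral leb (Omega t0 tE) (c_integrand c x)
  + sqnorm2 (b (fun k => ty x (tp k))).

Definition Fomega (t0 tE : R) f c b tp (w : R) (x : traj ny nz) : R :=
  Fobj t0 tE f x + (2 * w)^-1 * rpen t0 tE c b tp x.

(* Gamma(x) = - sum_j int_Omega log z_j dt, with value +oo when z is not
   positive a.e. (the logarithm is then undefined) *)
Definition Gamma (t0 tE : R) (x : traj ny nz) : \bar R :=
  if `[< \forall t \ae leb, Omega t0 tE t -> forall j : 'I_nz, 0 < tz x t ord0 j >]
  then (\sum_(j < nz) \int[leb]_(t in Omega t0 tE) (- ln (tz x t ord0 j))%:E)%E
  else +oo%E.

Definition Fomegatau (t0 tE : R) f c b tp (w tau : R) (x : traj ny nz) : \bar R :=
  ((Fomega t0 tE f c b tp w x)%:E + tau%:E * Gamma t0 tE x)%E.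

End PenaltyBarrier.

From HB Require Import structures.
From mathcomp Require Import all_boot all_order all_algebra.
From mathcomp Require Import all_classical all_reals all_analysis.
From mathcomp Require Import measurable_realfun lra.
Set Implicit Arguments.
Unset Strict Implicit.
Unset Printing Implicit Defensive.
Import Order.TTheory GRing.Theory Num.Theory.
Import numFieldNormedType.Exports.
Local Open Scope classical_set_scope.
Local Open Scope ring_scope.

(* Compare the barrier minimizer x_{omega,tau} with x_omega shifted by tau in every
   z-component.  The shifted point has finite barrier, so minimality forces z > 0 a.e.
   at x_{omega,tau} (otherwise its barrier is +oo); hence x_{omega,tau} is admissible
   for F_omega and F_omega(x_omega) <= F_omega(x_{omega,tau}).  Conversely, by Lipschitz
   continuity of f and c and the bound on c, the shift raises F_omega by O(tau); its
   barrier is at most -n_z |Omega| ln tau because its z is at least tau, whereas the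
   barrier of x_{omega,tau} is at least -n_z |Omega| max(ln B, 0) by the L^infty bound B
   of (A.4).  Minimality of x_{omega,tau} then gives a gap O(tau + tau |ln tau|), and
   tau |ln tau| <= tau^(1-zeta) / zeta because exp y >= y at y = -zeta ln tau. *)

Section integral_bounds.
Context d (T : measurableType d) (R : realType).
Variable mu : {measure set T -> \bar R}.
Local Open Scope ereal_scope.

Lemma ae_integral_le_cst (D : set T) (g : T -> R) (k : R) : measurable D ->
  measurable_fun D g -> (0 <= k)%R -> {ae mu, forall t, D t -> (g t <= k)%R} ->
  \int[mu]_(t in D) (g t)%:E <= k%:E * mu D.
Proof.
move=> mD mg k0 gk; have mEg : measurable_fun D (EFin \o g) by exact/measurable_EFinP.
rewrite integralE; apply: le_trans (_ : _ <= \int[mu]_(t in D) (EFin \o g)^\+ t - 0) _.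
  by apply: leeB => //; apply: integral_ge0 => t _; exact: funeneg_ge0.
rewrite sube0; apply: le_trans (integral_le_bound _ mD (measurable_funepos mEg) _ _).
- apply: ge0_le_integral => //; first exact: measurable_funepos.
    exact/measurableT_comp/measurable_funepos.
  by move=> t _; rewrite gee0_abs ?funepos_ge0.
- by rewrite lee_fin.
- apply: filterS gk => t gk Dt; rewrite gee0_abs ?funepos_ge0// funeposE /=.
  by rewrite ge_max !lee_fin k0 gk.
Qed.

Lemma ae_integral_ge_cst (D : set T) (g : T -> R) (k : R) : measurable D ->
  measurable_fun D g -> (0 <= k)%R -> {ae mu, forall t, D t -> (- k <= g t)%R} ->
  - (k%:E * mu D) <= \int[mu]_(t in D) (g t)%:E.
Proof.
move=> mD mg k0 gk; have mEg : measurable_fun D (EFin \o g) by exact/measurable_EFinP.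
rewrite integralE -[X in X <= _]sub0e; apply: leeB.
  by apply: integral_ge0 => t _; exact: funepos_ge0.
apply: le_trans (integral_le_bound _ mD (measurable_funeneg mEg) _ _).
- apply: ge0_le_integral => //; first exact: measurable_funeneg.
    exact/measurableT_comp/measurable_funeneg.
  by move=> t _; rewrite gee0_abs ?funeneg_ge0.
- by rewrite lee_fin.
- apply: filterS gk => t gk Dt; rewrite gee0_abs ?funeneg_ge0// funenegE /=.
  by rewrite ge_max !lee_fin k0 lerNl gk.
Qed.

Lemma Rintegral_subr_le_ae (D : set T) (g1 g2 : T -> R) (k : R) : measurable D ->
  mu D < +oo -> mu.-integrable D (EFin \o g1) -> mu.-integrable D (EFin \o g2) ->
  (0 <= k)%R -> {ae mu, forall t, D t -> (`|g1 t - g2 t| <= k)%R} ->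
  (\int[mu]_(t in D) g1 t - \int[mu]_(t in D) g2 t <= k * fine (mu D))%R.
Proof.
move=> mD Dfin i1 i2 k0 g12k.
have i12 : mu.-integrable D (EFin \o (g1 \- g2)%R) by exact: (integrableB mD i1 i2).
rewrite -RintegralB//; apply: le_trans (ler_norm _) _.
apply: le_trans (le_normr_Rintegral mD i12) _.
rewrite -lee_fin fineK; last exact: integrable_fin_num (integrable_norm i12).
rewrite EFinM fineK ?ge0_fin_numE//; apply: ae_integral_le_cst => //.
by apply/measurableT_comp => //; apply/measurable_EFinP; exact: measurable_int i12.
Qed.

End integral_bounds.

Section row_norms.
Variable R : realType.

Lemma norm1_ge0 n (v : 'rV[R]_n) : 0 <= norm1 v.
Proof. exact: sumr_ge0. Qed.

Lemma norm1_const_mx n (e : R) : 0 <= e -> norm1 (const_mx e : 'rV[R]_n) = n%:R * e.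
Proof.
move=> e0; rewrite /norm1; under eq_bigr do rewrite mxE ger0_norm//.
by rewrite sumr_const card_ord mulr_natl.
Qed.

Lemma ler_norm1_entry n (v : 'rV[R]_n) i : `|v ord0 i| <= norm1 v.
Proof. by rewrite /norm1 (bigD1 i)//= lerDl; exact: sumr_ge0. Qed.

Lemma sqnorm2B_le n (u v : 'rV[R]_n) :
  `|sqnorm2 u - sqnorm2 v| <= norm1 (u - v) * (norm1 u + norm1 v).
Proof.
rewrite /sqnorm2 -sumrB; apply: le_trans (ler_norm_sum _ _ _) _.
rewrite [norm1 (u - v)]/norm1 mulr_suml; apply: ler_sum => i _.
rewrite subr_sqr normrM !mxE ler_wpM2l// (le_trans (ler_normD _ _))//.
by rewrite lerD// ler_norm1_entry.
Qed.

End row_norms.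

Section xlnx_bound.
Variable R : realType.

Lemma lnN_le_powRN (x zeta : R) : 0 < x -> 0 < zeta ->
  - ln x <= zeta^-1 * x `^ (- zeta).
Proof.
move=> x0 zeta0; rewrite ler_pdivlMl// /powR gt_eqF//.
by apply: le_trans (expR_ge1Dx _); rewrite mulNr -mulrN lerDr.
Qed.

Lemma xlnx_le_powR (x zeta : R) : 0 < x -> 0 < zeta ->
  x * - ln x <= zeta^-1 * x `^ (1 - zeta).
Proof.
move=> x0 zeta0; rewrite powRD; last by rewrite (gt_eqF x0) implybT.
by rewrite (powRr1 (ltW x0)) mulrCA ler_wpM2l ?lnN_le_powRN// ltW.
Qed.

Lemma linear_xlnx_le_powR (A B x zeta : R) : 0 <= A -> 0 <= B -> 0 < x <= 1 ->
  0 < zeta -> A * x + B * (x * - ln x) <= (A + B / zeta) * x `^ (1 - zeta).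
Proof.
move=> A0 B0 /andP[x0 x1] zeta0; rewrite mulrDl -mulrA lerD//.
  by rewrite ler_wpM2l// ger1_powR ?x0// lerBlDr lerDl ltW.
by rewrite ler_wpM2l// xlnx_le_powR.
Qed.

End xlnx_bound.

Lemma barrier_le_EFin (R : realType) (a0 a1 tau g0 g1 : R) (G0 G1 : \bar R) :
  0 <= tau -> (g0%:E <= G0)%E -> (G1 <= g1%:E)%E ->
  (a0%:E + tau%:E * G0 <= a1%:E + tau%:E * G1)%E -> a0 + tau * g0 <= a1 + tau * g1.
Proof.
move=> tau0 gG0 Gg1 aG; rewrite -lee_fin !EFinD !EFinM.
apply: le_trans (le_trans _ aG) _; apply: leeD2l; exact: lee_wpmul2l.
Qed.

Section barrier_estimate.
Variables (R : realType) (t0 tE : R) (ny nz nc nb M : nat) (tp : 'I_M -> R).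
Variables (f : 'rV[R]_ny -> 'rV[R]_ny -> 'rV[R]_nz -> R -> R)
  (c : 'rV[R]_ny -> 'rV[R]_ny -> 'rV[R]_nz -> R -> 'rV[R]_nc)
  (b : ('I_M -> 'rV[R]_ny) -> 'rV[R]_nb).
Hypothesis t0_lt_tE : t0 < tE.
Local Notation leb := (@lebesgue_measure R).
Local Notation Om := (Omega t0 tE).
Local Notation inX := (@inX R ny nz t0 tE).
Local Notation zge0 := (@zge0 R ny nz t0 tE).
(* The [Filter] instance of [almost_everywhere leb] is not found by unification. *)
Local Notation ae_filterS := (filterS (F := almost_everywhere leb)).
Local Notation ae_filterS2 := (filterS2 (F := almost_everywhere leb)).

Lemma measurable_Omega : measurable Om.
Proof. exact: measurable_itv. Qed.
#[local] Hint Resolve measurable_Omega : core.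

Lemma lebesgue_Omega : leb Om = (tE - t0)%:E.
Proof. by rewrite lebesgue_measure_itv/= lte_fin t0_lt_tE. Qed.

Lemma lebesgue_Omega_lt_pinfty : (leb Om < +oo)%E.
Proof. by rewrite lebesgue_measure_itv; case: ifP => _; rewrite ?ltry. Qed.

Lemma L2fun_addr_cst (g : R -> R) (e : R) :
  L2fun t0 tE g -> L2fun t0 tE (fun t => g t + e).
Proof.
move=> [mg g2fin]; split; first exact/measurable_funD.
have mg2 : measurable_fun Om (fun t => (2 * g t ^+ 2)%:E).
  by apply/measurable_EFinP/measurable_funM => //; exact: measurable_funX.
apply: le_lt_trans
  (_ : _ <= \int[leb]_(t in Om) ((2 * g t ^+ 2)%:E + (2 * e ^+ 2)%:E))%E _.
  apply: ge0_le_integral => //.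
  - by move=> t _; rewrite lee_fin sqr_ge0.
  - by apply/measurable_EFinP/measurable_funX/measurable_funD.
  - by apply: emeasurable_funD => //; exact: measurable_cst.
  - move=> t _; rewrite -EFinD lee_fin.
    by have := sqr_ge0 (g t - e); rewrite !expr2; nra.
rewrite ge0_integralD//; last 2 first.
- by move=> t _; rewrite lee_fin mulr_ge0 ?sqr_ge0.
- by move=> t _; rewrite lee_fin mulr_ge0 ?sqr_ge0.
apply: lte_add_pinfty.
  under eq_integral do rewrite EFinM.
  rewrite ge0_integralZl_EFin //; first exact: lte_mul_pinfty.
  - by move=> t _; rewrite lee_fin sqr_ge0.
  - by apply/measurable_EFinP; exact: measurable_funX.
rewrite integral_cst//; apply: lte_mul_pinfty => //; last exact: lebesgue_Omega_lt_pinfty.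
by rewrite lee_fin mulr_ge0 ?sqr_ge0.
Qed.

Definition shift_z (x : traj R ny nz) (e : R) : traj R ny nz :=
  Traj (ty x) (tdy x) (fun t => tz x t + const_mx e).

Definition zgt0 (x : traj R ny nz) : Prop :=
  \forall t \ae leb, Om t -> forall j : 'I_nz, 0 < tz x t ord0 j.

Lemma inX_shift_z x e : inX x -> inX (shift_z x e).
Proof.
move=> [yH1 zL2]; split=> // j.
have -> : (fun t => tz (shift_z x e) t ord0 j) = (fun t => tz x t ord0 j + e).
  by apply: funext => t; rewrite !mxE.
exact: L2fun_addr_cst.
Qed.

Lemma zgt0_shift_z x e : zge0 x -> 0 < e -> zgt0 (shift_z x e).
Proof.
move=> xge0 e0; apply: (ae_filterS _ xge0) => t zt0 Ot j.
by rewrite !mxE ltr_wpDl// zt0.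
Qed.

Lemma zgt0_zge0 x : zgt0 x -> zge0 x.
Proof.
by move=> xgt0; apply: (ae_filterS _ xgt0) => t zt0 Ot j; rewrite ltW// zt0.
Qed.

Lemma norm1_shift_z (dy y : 'rV[R]_ny) (z : 'rV[R]_nz) (e : R) : 0 <= e ->
  norm1 (dy - dy) + norm1 (y - y) + norm1 (z + const_mx e - z) = nz%:R * e.
Proof.
move=> e0; rewrite !subrr [z + _]addrC addrK norm1_const_mx//.
by rewrite /norm1 !big1 ?add0r// => i _; rewrite mxE normr0.
Qed.

Lemma Gamma_shift_z_le x e : inX x -> zge0 x -> 0 < e <= 1 ->
  (Gamma t0 tE (shift_z x e) <= (nz%:R * (- ln e * (tE - t0)))%:E)%E.
Proof.
move=> xX xge0 /andP[e0 e1]; rewrite /Gamma asboolT; last exact: zgt0_shift_z.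
have -> : (nz%:R * (- ln e * (tE - t0)))%:E = (\sum_(j < nz) (- ln e * (tE - t0))%:E)%E.
  by rewrite sumEFin sumr_const card_ord mulr_natl.
apply: lee_sum => j _; rewrite EFinM -lebesgue_Omega.
have [mz _] := (inX_shift_z e xX).2 j.
apply: ae_integral_le_cst => //.
- exact: measurableT_comp (measurableT_comp (@measurable_ln R) mz).
- by rewrite oppr_ge0 ln_le0.
apply: (ae_filterS _ xge0) => t zt0 Ot.
have zte0 : 0 < tz x t ord0 j + e by rewrite ltr_wpDl// zt0.
by rewrite !mxE lerN2 ler_ln ?posrE// lerDr zt0.
Qed.

Lemma Gamma_ge_zLinf x B : inX x -> zgt0 x -> zLinf_le t0 tE x B ->
  ((- (nz%:R * (Num.max (ln B) 0 * (tE - t0))))%:E <= Gamma t0 tE x)%E.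
Proof.
move=> xX xgt0 xB; rewrite /Gamma asboolT//.
have -> : (- (nz%:R * (Num.max (ln B) 0 * (tE - t0))))%:E
    = (\sum_(j < nz) (- (Num.max (ln B) 0 * (tE - t0)))%:E)%E.
  by rewrite sumEFin sumr_const card_ord mulr_natl mulNrn.
apply: lee_sum => j _; rewrite EFinN EFinM -lebesgue_Omega.
have [mz _] := xX.2 j.
apply: ae_integral_ge_cst => //.
- exact: measurableT_comp (measurableT_comp (@measurable_ln R) mz).
- by rewrite le_max lexx orbT.
apply: (ae_filterS2 _ _ xgt0 xB) => t zt0 ztB Ot.
have zB : tz x t ord0 j <= B by rewrite (le_trans (ler_norm _) (ztB Ot j)).
rewrite lerN2 le_max ler_ln ?posrE ?zt0 ?zB//; exact: lt_le_trans (zt0 Ot j) zB.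
Qed.

Lemma zgt0_of_barrier_minimizer w tau x0 x1 : 0 < tau -> inX x1 ->
  (Gamma t0 tE x1 < +oo)%E ->
  (forall x, inX x ->
     (Fomegatau t0 tE f c b tp w tau x0 <= Fomegatau t0 tE f c b tp w tau x)%E) ->
  zgt0 x0.
Proof.
move=> tau0 x1X G1fin x0min; apply: contrapT => x0npos.
have := x0min x1 x1X; rewrite /Fomegatau {1}/Gamma asboolF// gt0_muley ?lte_fin//.
rewrite addey// leNgt => /negP; apply.
by rewrite lte_add_pinfty ?ltry// lte_mul_pinfty ?lee_fin ?ltW.
Qed.

Section shift_cost.
Variables (L K : R).
Hypothesis f_lipschitz : forall (dy y dy' y' : 'rV[R]_ny) (z z' : 'rV[R]_nz) t,
  Om t -> `|f dy y z t - f dy' y' z' t|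
    <= L * (norm1 (dy - dy') + norm1 (y - y') + norm1 (z - z')).
Hypothesis c_lipschitz : forall (dy y dy' y' : 'rV[R]_ny) (z z' : 'rV[R]_nz) t,
  Om t -> norm1 (c dy y z t - c dy' y' z' t)
    <= L * (norm1 (dy - dy') + norm1 (y - y') + norm1 (z - z')).
Hypothesis c_bounded : forall (dy y : 'rV[R]_ny) (z : 'rV[R]_nz) t,
  Om t -> (forall j, 0 <= z ord0 j) -> norm1 (c dy y z t) <= K.
Hypothesis integrable_Fr : forall x, inX x ->
  leb.-integrable Om (EFin \o f_integrand f x) /\
  leb.-integrable Om (EFin \o c_integrand c x).

Let maxL_ge0 : 0 <= Num.max L 0. Proof. by rewrite le_max lexx orbT. Qed.
Let maxK_ge0 : 0 <= Num.max K 0. Proof. by rewrite le_max lexx orbT. Qed.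

Definition shift_cost (w : R) :=
  Num.max L 0 * nz%:R * (tE - t0) * (1 + (2 * w)^-1 * (2 * Num.max K 0)).

Lemma shift_cost_ge0 w : 0 <= w -> 0 <= shift_cost w.
Proof.
move=> w0; have T0 : 0 <= tE - t0 by rewrite subr_ge0 ltW.
have K0 : 0 <= (2 * w)^-1 * (2 * Num.max K 0) by rewrite mulr_ge0 ?invr_ge0 ?mulr_ge0.
by rewrite !mulr_ge0// addr_ge0.
Qed.

Lemma Fobj_shift_z_le x e : inX x -> 0 <= e ->
  Fobj t0 tE f (shift_z x e) - Fobj t0 tE f x <= Num.max L 0 * (nz%:R * e) * (tE - t0).
Proof.
move=> xX e0; have [ifs _] := integrable_Fr (inX_shift_z e xX).
have [ifx _] := integrable_Fr xX.
rewrite -[tE - t0]/(fine (tE - t0)%:E) -lebesgue_Omega.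
apply: Rintegral_subr_le_ae => //; first exact: lebesgue_Omega_lt_pinfty.
  by rewrite !mulr_ge0.
apply: aeW => t Ot; apply: le_trans (f_lipschitz _ _ _ _ _ _ Ot) _.
by rewrite norm1_shift_z// ler_wpM2r ?mulr_ge0// le_max lexx.
Qed.

Lemma rpen_shift_z_le x e : inX x -> zge0 x -> 0 <= e ->
  rpen t0 tE c b tp (shift_z x e) - rpen t0 tE c b tp x
    <= Num.max L 0 * (nz%:R * e) * (2 * Num.max K 0) * (tE - t0).
Proof.
move=> xX xge0 e0; have [_ ics] := integrable_Fr (inX_shift_z e xX).
have [_ icx] := integrable_Fr xX.
rewrite /rpen opprD addrACA subrr addr0.
rewrite -[tE - t0]/(fine (tE - t0)%:E) -lebesgue_Omega.
apply: Rintegral_subr_le_ae => //; first exact: lebesgue_Omega_lt_pinfty.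
  by rewrite !mulr_ge0.
apply: (ae_filterS _ xge0) => t zt0 Ot.
have zte0 j : 0 <= (tz x t + const_mx e) ord0 j by rewrite !mxE addr_ge0// zt0.
apply: le_trans (sqnorm2B_le _ _) _; apply: ler_pM; rewrite ?addr_ge0 ?norm1_ge0//.
  apply: le_trans (c_lipschitz _ _ _ _ _ _ Ot) _.
  by rewrite norm1_shift_z// ler_wpM2r ?mulr_ge0// le_max lexx.
have cK dy y (z : 'rV_nz) :
    (forall j, 0 <= z ord0 j) -> norm1 (c dy y z t) <= Num.max K 0.
  by move=> z0; rewrite (le_trans (c_bounded dy y Ot z0))// le_max lexx.
by rewrite mulr_natl mulr2n lerD ?cK//; exact: zt0.
Qed.

Lemma Fomega_shift_z_le w x e : 0 <= w -> inX x -> zge0 x -> 0 <= e ->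
  Fomega t0 tE f c b tp w (shift_z x e) <= Fomega t0 tE f c b tp w x + e * shift_cost w.
Proof.
move=> w0 xX xge0 e0; have dF := Fobj_shift_z_le xX e0.
have iw0 : 0 <= (2 * w)^-1 by rewrite invr_ge0 mulr_ge0.
have dr := ler_wpM2l iw0 (rpen_shift_z_le xX xge0 e0).
rewrite mulrBr in dr; rewrite /Fomega /shift_cost; lra.
Qed.

End shift_cost.

End barrier_estimate.

Theorem mainTheorem11 (R : realType) (t0 tE : R) (ny nz nc nb M : nat)
  (tp : 'I_M -> R)
  (f : 'rV[R]_ny -> 'rV[R]_ny -> 'rV[R]_nz -> R -> R)
  (c : 'rV[R]_ny -> 'rV[R]_ny -> 'rV[R]_nz -> R -> 'rV[R]_nc)
  (b : ('I_M -> 'rV[R]_ny) -> 'rV[R]_nb)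
  (xs : traj R ny nz) (xw : R -> traj R ny nz) (xwt : R -> R -> traj R ny nz) :
  t0 < tE ->
  (forall k, t0 <= tp k <= tE) ->
  (* F and r are well defined on X: their integrands are integrable *)
  (forall x, inX t0 tE x ->
     (@lebesgue_measure R).-integrable (Omega t0 tE) (EFin \o f_integrand f x) /\
     (@lebesgue_measure R).-integrable (Omega t0 tE) (EFin \o c_integrand c x)) ->
  (* (A.2) *)
  (exists K : R,
     (forall (dy y : 'rV[R]_ny) (z : 'rV[R]_nz) (t : R), Omega t0 tE t -> (forall j : 'I_nz, 0 <= z ord0 j) ->
        norm1 (c dy y z t) <= K) /\
     (forall ys : 'I_M -> 'rV[R]_ny, norm1 (b ys) <= K)) ->
  (exists m : R, forall x, inX t0 tE x -> zge0 t0 tE x -> m <= Fobj t0 tE f x) ->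
  (* (A.3) *)
  (exists L : R,
     (forall (dy y dy' y' : 'rV[R]_ny) (z z' : 'rV[R]_nz) (t : R), Omega t0 tE t ->
        `|f dy y z t - f dy' y' z' t|
          <= L * (norm1 (dy - dy') + norm1 (y - y') + norm1 (z - z'))) /\
     (forall (dy y dy' y' : 'rV[R]_ny) (z z' : 'rV[R]_nz) (t : R), Omega t0 tE t ->
        norm1 (c dy y z t - c dy' y' z' t)
          <= L * (norm1 (dy - dy') + norm1 (y - y') + norm1 (z - z'))) /\
     (forall ys ys' : 'I_M -> 'rV[R]_ny, norm1 (b ys - b ys') <= L * \sum_(k < M) norm1 (ys k - ys' k))) ->
  (* x^star is a global minimizer of the DOP *)
  (inX t0 tE xs /\ zge0 t0 tE xs /\
   b (fun k => ty xs (tp k)) = 0 /\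
   (\forall t \ae (@lebesgue_measure R), Omega t0 tE t ->
       c (tdy xs t) (ty xs t) (tz xs t) t = 0) /\
   (forall x, inX t0 tE x -> zge0 t0 tE x -> b (fun k => ty x (tp k)) = 0 ->
      (\forall t \ae (@lebesgue_measure R), Omega t0 tE t ->
          c (tdy x t) (ty x t) (tz x t) t = 0) ->
      Fobj t0 tE f xs <= Fobj t0 tE f x)) ->
  (* x^star_omega minimizes F_omega over {z >= 0 a.e.} *)
  (forall w, 0 < w < 1 ->
     inX t0 tE (xw w) /\ zge0 t0 tE (xw w) /\
     forall x, inX t0 tE x -> zge0 t0 tE x ->
       Fomega t0 tE f c b tp w (xw w) <= Fomega t0 tE f c b tp w x) ->
  (* x^star_{omega,tau} minimizes F_{omega,tau} over X *)
  (forall w tau, 0 < w < 1 -> 0 < tau <= w ->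
     inX t0 tE (xwt w tau) /\
     forall x, inX t0 tE x ->
       (Fomegatau t0 tE f c b tp w tau (xwt w tau)
          <= Fomegatau t0 tE f c b tp w tau x)%E) ->
  (* (A.4) *)
  (exists B : R,
     normX t0 tE xs <= B /\
     forall w, 0 < w < 1 ->
       (zLinf_le t0 tE (xw w) B /\ normX t0 tE (xw w) <= B) /\
       forall tau, 0 < tau <= w ->
         zLinf_le t0 tE (xwt w tau) B /\ normX t0 tE (xwt w tau) <= B) ->
  (* conclusion: |F_omega(x_{omega,tau}) - F_omega(x_omega)| = O(tau^(1-zeta)) as tau -> 0 *)
  forall w zeta : R, 0 < w < 1 -> 0 < zeta < 1 ->
  exists C delta : R, 0 < delta /\
    forall tau, 0 < tau -> tau < delta -> tau <= w ->
      `|Fomega t0 tE f c b tp w (xwt w tau) - Fomega t0 tE f c b tp w (xw w)|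
        <= C * tau `^ (1 - zeta).
Proof.
move=> t0_lt_tE _ integrable_Fr [K [c_bounded _]] _ [L [f_lip [c_lip _]]] _
  xw_min xwt_min [B [_ B_bounds]] w zeta w01 /andP[zeta0 _].
have [w0 w1] := andP w01.
set A := shift_cost t0 tE nz L K w + nz%:R * (Num.max (ln B) 0 * (tE - t0)).
exists (A + nz%:R * (tE - t0) / zeta), 1; split=> // tau tau0 _ tau_w.
have tau0w : 0 < tau <= w by rewrite tau0 tau_w.
have tau01 : 0 < tau <= 1 by rewrite tau0 (le_trans tau_w (ltW w1)).
have [xwX [xw_ge0 xw_opt]] := xw_min w w01.
have [xwtX xwt_opt] := xwt_min w tau w01 tau0w.
have [xwt_B _] := (B_bounds w w01).2 tau tau0w.
have xeX := inX_shift_z tau xwX.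
have G_xe := Gamma_shift_z_le t0_lt_tE xwX xw_ge0 tau01.
have xwt_gt0 := zgt0_of_barrier_minimizer tau0 xeX (le_lt_trans G_xe (ltry _)) xwt_opt.
have G_xwt := Gamma_ge_zLinf t0_lt_tE xwtX xwt_gt0 xwt_B.
have lower := xw_opt _ xwtX (zgt0_zge0 xwt_gt0).
have upper := barrier_le_EFin (ltW tau0) G_xwt G_xe (xwt_opt _ xeX).
have shift := Fomega_shift_z_le tp b t0_lt_tE f_lip c_lip c_bounded integrable_Fr
  (ltW w0) xwX xw_ge0 (ltW tau0).
rewrite ger0_norm ?subr_ge0//.
have T0 : 0 <= tE - t0 by rewrite subr_ge0 ltW.
apply: le_trans (linear_xlnx_le_powR _ _ tau01 zeta0); last exact: mulr_ge0.
- by rewrite /A; lra.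
- by rewrite addr_ge0 ?shift_cost_ge0 ?mulr_ge0 ?le_max ?lexx ?orbT// ltW.
Qed.
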